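(* Let $G$ be a graph with a linear order $<$ on $V(G)$ satisfying the X-property, let $s<t$ be vertices with $d^*:=\operatorname{dist}(s,t)<\infty$, and let $d$ be an integer. Each of the following conditions implies $d^*\le d$: (i) $\beta_s(\sigma)=\beta_t(\tau)$ for some nonnegative integers $\sigma,\tau$ with $\sigma+\tau=d$; (ii) $G$ contains an edge between $\alpha_s(\sigma)$ and $\alpha_t(\tau)$ for some nonnegative integers $\sigma,\tau$ with $\sigma+\tau=d-1$; (iii) there are nonnegative integers $\sigma,\tau$ with $\sigma+\tau=d-3$ and vertices $v\in\{\alpha_s(\sigma),\beta_s(\sigma)\}$, $w\in\{\alpha_t(\tau),\beta_t(\tau)\}$ with $v<w$, $\operatorname{rhorizon}(v)\ge t$ and $\operatorname{lhorizon}(w)\le s$.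
   Context: The X-property: for all vertices $p<q<r<s$, if $\{p,r\}\in E(G)$ and $\{q,s\}\in E(G)$ then $\{p,s\}\in E(G)$. $N[v]$ is the closed neighborhood; $\operatorname{lhorizon}(v):=\min N[v]$ and $\operatorname{rhorizon}(v):=\max N[v]$ w.r.t. $<$. For an integer $k\ge 0$: $\alpha_s(k)$ (resp. $\beta_s(k)$) is the leftmost (resp. rightmost) vertex reachable from $s$ by a path of length at most $k$ using only vertices $v\le t$; $\alpha_t(k)$ (resp. $\beta_t(k)$) is the rightmost (resp. leftmost) vertex reachable from $t$ by a path of length at most $k$ using only vertices $v\ge s$. *)

(* Vertices of the ordered graph are 'I_n with the natural
   order on nat (every finite linearly ordered vertex set is of this form). *)
From mathcomp Require Import all_boot.
Set Implicit Arguments. Unset Strict Implicit. Unset Printing Implicit Defensive.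

Section OrderedGraph.
Variables (n : nat) (e : rel 'I_n).

Definition simple_graph : Prop := symmetric e /\ irreflexive e.

Definition X_property : Prop :=
  forall p q r s : 'I_n, p < q -> q < r -> r < s ->
    e p r -> e q s -> e p s.

Definition walk_len (k : nat) (x y : 'I_n) : Prop :=
  exists p : seq 'I_n, [/\ path e x p, last x p = y & size p = k].

Definition is_dist (x y : 'I_n) (k : nat) : Prop :=
  walk_len k x y /\ forall j, walk_len j x y -> k <= j.

Definition reach_within (P : pred 'I_n) (k : nat) (x y : 'I_n) : bool :=
  [exists m : 'I_k.+1, exists p : m.-tuple 'I_n,
     [&& path e x p, last x p == y & all P (x :: p)]].

Lemma reach_within_refl (P : pred 'I_n) k x : P x -> reach_within P k x x.
Proof.
move=> Px; apply/existsP; exists ord0; apply/existsP; exists [tuple].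
by rewrite /= eqxx Px.
Qed.

Variables (s t : 'I_n).

Definition left_of_t : pred 'I_n := fun v => v <= t.
Definition right_of_s : pred 'I_n := fun v => s <= v.

Lemma s_ok : s <= t -> left_of_t s. Proof. by []. Qed.

Definition alpha_s (k : nat) : 'I_n :=
  [arg min_(v < s | reach_within left_of_t k s v) (v : nat)].
Definition beta_s (k : nat) : 'I_n :=
  [arg max_(v > s | reach_within left_of_t k s v) (v : nat)].
Definition alpha_t (k : nat) : 'I_n :=
  [arg max_(v > t | reach_within right_of_s k t v) (v : nat)].
Definition beta_t (k : nat) : 'I_n :=
  [arg min_(v < t | reach_within right_of_s k t v) (v : nat)].

End OrderedGraph.

Definition lhorizon n (e : rel 'I_n) (v : 'I_n) : 'I_n :=
  [arg min_(u < v | (u == v) || e v u) (u : nat)].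
Definition rhorizon n (e : rel 'I_n) (v : 'I_n) : 'I_n :=
  [arg max_(u > v | (u == v) || e v u) (u : nat)].

(* Every hypothesis produces an s-t walk of length at most d.  In (i) and (ii)
   the two witness walks meet in a common vertex or are joined by an edge.  In
   (iii) put B = rhorizon v and C = lhorizon w, so that vB and Cw are edges
   (or v = t, resp. w = s).  If the edges cross, the X-property joins v to w
   in at most 3 steps.  If they are nested, say v < B < w, the walk from t to
   w must jump over B along an edge ac; the X-property applied to ac and vB,
   or, when a lies left of v, to ac and the edge where the walk from s jumps
   over a, yields an s-t walk of length at most sigma + tau + 1.  The other
   nesting is the mirror image of this one under the order reversal
   [rev_ord]. *)

From mathcomp Require Import all_boot all_order all_algebra.
Import Order.TTheory GRing.Theory Num.Theory.
From mathcomp Require Import zify.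
Set Implicit Arguments. Unset Strict Implicit. Unset Printing Implicit Defensive.

Section Walks.
Variables (n : nat) (e : rel 'I_n).
Implicit Types (P : pred 'I_n) (x y z : 'I_n) (p : seq 'I_n).

Definition walk_atmost k x y : Prop :=
  exists p, [/\ path e x p, last x p = y & size p <= k].

Lemma walk_atmost0 x : walk_atmost 0 x x.
Proof. by exists [::]. Qed.

Lemma walk_atmost_edge x y : e x y -> walk_atmost 1 x y.
Proof. by move=> exy; exists [:: y]; rewrite /= exy. Qed.

Lemma walk_atmost_cat i j x y z :
  walk_atmost i x y -> walk_atmost j y z -> walk_atmost (i + j) x z.
Proof.
move=> [p [xp <- sp]] [q [yq <- sq]]; exists (p ++ q).
by rewrite cat_path xp yq last_cat size_cat leq_add.
Qed.

Lemma walk_atmost_le i j x y : i <= j -> walk_atmost i x y -> walk_atmost j x y.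
Proof. by move=> le_ij [p [xp yp sp]]; exists p; split=> //; apply: leq_trans le_ij. Qed.

Lemma walk_atmost_rev k x y : symmetric e -> walk_atmost k x y -> walk_atmost k y x.
Proof.
move=> sym [p [xp <- sp]]; apply: walk_atmost_le sp _.
elim: p x xp => [|z p IHp] x /=; first by move=> _; exact: walk_atmost0.
case/andP=> exz zp; rewrite -addn1; apply: walk_atmost_cat (IHp z zp) _.
by apply: walk_atmost_edge; rewrite sym.
Qed.

Lemma is_dist_le x y d k : is_dist e x y d -> walk_atmost k x y -> d <= k.
Proof. by move=> [_ dmin] [p [xp yp sp]]; apply: leq_trans sp; apply: dmin; exists p. Qed.

Lemma reach_withinP P k x y :
  reflect (exists p, [/\ path e x p, last x p = y, size p <= k & all P (x :: p)])
          (reach_within e P k x y).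
Proof.
apply: (iffP existsP) => [[m /existsP[p /and3P[xp /eqP yp Pp]]] | [p [xp yp sp Pp]]].
  by exists p; rewrite size_tuple -ltnS ltn_ord.
exists (Ordinal (sp : size p < k.+1)); apply/existsP; exists (in_tuple p).
by rewrite xp yp eqxx Pp.
Qed.

Lemma reach_within_walk P k x y : reach_within e P k x y -> walk_atmost k x y.
Proof. by case/reach_withinP=> p [xp yp sp _]; exists p. Qed.

Lemma reach_within_end P k x y : reach_within e P k x y -> P y.
Proof. by case/reach_withinP=> p [_ <- _ Pp]; apply: (allP Pp); exact: mem_last. Qed.

Lemma reach_within_sub P Q k x y :
  {subset P <= Q} -> reach_within e P k x y -> reach_within e Q k x y.
Proof.
move=> sPQ /reach_withinP[p [xp yp sp Pp]]; apply/reach_withinP.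
by exists p; split=> //; apply: sub_all Pp => u; apply: sPQ.
Qed.

Lemma reach_within_cons P k x y z :
  e x y -> P x -> reach_within e P k y z -> reach_within e P k.+1 x z.
Proof.
move=> exy Px /reach_withinP[p [yp zp sp Pp]]; apply/reach_withinP.
by exists (y :: p); split; rewrite /= ?exy ?Px ?ltnS.
Qed.

Lemma path_cross_up P x p (m : nat) :
  path e x p -> all P (x :: p) -> x < m <= last x p ->
  exists (a c : 'I_n) j, [/\ a < m <= c, e a c, P c, reach_within e P j x a & j < size p].
Proof.
elim: p x => [|y p IHp] x /=; first by move=> _ _; lia.
case/andP=> exy yp /and3P[Px Py Pp] /andP[lt_xm le_m_last].
case: (leqP m y) => [le_my | lt_ym].
  by exists x, y, 0; rewrite lt_xm le_my exy Py reach_within_refl.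
have Pyp : all P (y :: p) by rewrite /= Py Pp.
have [a [c [j [acm eac Pc ya ltj]]]] := IHp y yp Pyp (introT andP (conj lt_ym le_m_last)).
by exists a, c, j.+1; split=> //; exact: reach_within_cons ya.
Qed.

Lemma reach_within_cross_up P k x y (m : nat) :
  reach_within e P k x y -> x < m <= y ->
  exists (a c : 'I_n) j, [/\ a < m <= c, e a c, P c, reach_within e P j x a & j < k].
Proof.
case/reach_withinP=> p [xp <- sp Pp] /(path_cross_up xp Pp)[a [c [j [? ? ? ? ltj]]]].
by exists a, c, j; split=> //; apply: leq_trans sp.
Qed.

End Walks.

Section Mirror.
Variables (n : nat) (e : rel 'I_n).

Definition mirror : rel 'I_n := relpre (@rev_ord n) e.

Lemma leq_rev_ord (x y : 'I_n) : (x <= rev_ord y) = (y <= rev_ord x).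
Proof. by rewrite /=; have := ltn_ord x; have := ltn_ord y; lia. Qed.

Lemma rev_ord_leq (x y : 'I_n) : (rev_ord x <= y) = (rev_ord y <= x).
Proof. by rewrite /=; have := ltn_ord x; have := ltn_ord y; lia. Qed.

Lemma ltn_rev_ord (x y : 'I_n) : (rev_ord x < rev_ord y) = (y < x).
Proof. by rewrite /=; have := ltn_ord x; have := ltn_ord y; lia. Qed.

Lemma mirror_sym : symmetric e -> symmetric mirror.
Proof. by move=> sym x y; apply: sym. Qed.

Lemma mirror_X : symmetric e -> X_property e -> X_property mirror.
Proof.
move=> sym X p q r s lt_pq lt_qr lt_rs epr eqs; rewrite /mirror /= sym.
by apply: (X _ (rev_ord r) (rev_ord q)); rewrite ?ltn_rev_ord // sym.
Qed.

Lemma reach_within_mirror P k x y :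
  reach_within e P k x y ->
  reach_within mirror [pred u | P (rev_ord u)] k (rev_ord x) (rev_ord y).
Proof.
case/reach_withinP=> p [xp yp sp Pp]; apply/reach_withinP; exists (map (@rev_ord n) p).
rewrite -path_map (rev_ordK x) (mapK rev_ordK) last_map yp size_map -map_cons all_map.
by split=> //; apply: sub_all Pp => u /=; rewrite (rev_ordK u).
Qed.

Lemma walk_atmost_mirror k x y :
  walk_atmost mirror k x y -> walk_atmost e k (rev_ord x) (rev_ord y).
Proof.
by move=> [p [xp <- sp]]; exists (map (@rev_ord n) p); rewrite path_map last_map size_map.
Qed.

End Mirror.

Section NestedUp.
Variables (n : nat) (e : rel 'I_n) (s t : 'I_n).
Hypotheses (sym : symmetric e) (X : X_property e).

Lemma walk_around_nested_up sigma tau (v w B : 'I_n) :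
  reach_within e (left_of_t t) sigma s v -> reach_within e (right_of_s s) tau t w ->
  e v B -> t <= B < w -> walk_atmost e (sigma + tau + 1) s t.
Proof.
move=> sv tw evB /andP[le_tB lt_Bw].
have s_to_v := reach_within_walk sv.
move: le_tB; rewrite leq_eqVlt => /orP[/eqP/val_inj-> | lt_tB].
  by apply: walk_atmost_le (walk_atmost_cat s_to_v (walk_atmost_edge evB)); lia.
have [a [c [j [/andP[lt_aB le_Bc] eac _ ta lt_j_tau]]]] :=
  reach_within_cross_up tw (introT andP (conj lt_tB (ltnW lt_Bw))).
have le_sa : s <= a := reach_within_end ta.
have a_to_t := walk_atmost_rev sym (reach_within_walk ta).
have c_to_t : walk_atmost e tau c t.
  apply/(walk_atmost_rev sym)/(walk_atmost_le lt_j_tau); rewrite -addn1.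
  exact: walk_atmost_cat (reach_within_walk ta) (walk_atmost_edge eac).
have via_c u : walk_atmost e sigma s u -> e u c -> walk_atmost e (sigma + tau + 1) s t.
  move=> su euc; rewrite addnAC.
  exact: walk_atmost_cat (walk_atmost_cat su (walk_atmost_edge euc)) c_to_t.
have evc_or_lt_av : e v c \/ a < v.
  case: (ltngtP a v) => [lt_av | lt_va | /val_inj <-]; [by right | left | by left].
  move: le_Bc; rewrite leq_eqVlt => /orP[/eqP/val_inj<- // | lt_Bc].
  exact: X lt_va lt_aB lt_Bc evB eac.
case: evc_or_lt_av => [evc | lt_av]; first exact: via_c v s_to_v evc.
move: le_sa; rewrite leq_eqVlt => /orP[/eqP/val_inj eq_sa | lt_sa].
  by rewrite -eq_sa in eac; exact: via_c s (walk_atmost_le (leq0n _) (walk_atmost0 e s)) eac.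
have [a' [c' [j' [/andP[lt_a'a le_ac'] ea'c' le_c't sa' lt_j'_sigma]]]] :=
  reach_within_cross_up sv (introT andP (conj lt_sa (ltnW lt_av))).
have s_to_a' := reach_within_walk sa'.
move: le_ac'; rewrite leq_eqVlt => /orP[/eqP/val_inj eq_ac' | lt_ac'].
  rewrite -eq_ac' in ea'c'.
  have s_to_a := walk_atmost_cat s_to_a' (walk_atmost_edge ea'c').
  by apply: walk_atmost_le (walk_atmost_cat s_to_a a_to_t); lia.
have lt_c'c : c' < c by move: le_c't lt_tB le_Bc; rewrite /left_of_t; lia.
have ea'c : e a' c := X lt_a'a lt_ac' lt_c'c ea'c' eac.
exact: via_c a' (walk_atmost_le (ltnW lt_j'_sigma) s_to_a') ea'c.
Qed.

End NestedUp.

Lemma rhorizon_adj n (e : rel 'I_n) v : rhorizon e v = v \/ e v (rhorizon e v).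
Proof.
rewrite /rhorizon; case: arg_maxnP => [|u /orP[/eqP|]]; [by rewrite eqxx | by left | by right].
Qed.

Lemma lhorizon_adj n (e : rel 'I_n) v : lhorizon e v = v \/ e v (lhorizon e v).
Proof.
rewrite /lhorizon; case: arg_minnP => [|u /orP[/eqP|]]; [by rewrite eqxx | by left | by right].
Qed.

Section Horizons.
Variables (n : nat) (e : rel 'I_n) (s t : 'I_n).
Hypotheses (sym : symmetric e) (irr : irreflexive e) (X : X_property e).

Lemma walk_around_nested_down sigma tau (v w C : 'I_n) :
  reach_within e (left_of_t t) sigma s v -> reach_within e (right_of_s s) tau t w ->
  e w C -> v < C <= s -> walk_atmost e (sigma + tau + 1) s t.
Proof.
move=> sv tw ewC /andP[lt_vC le_Cs].
apply: (walk_atmost_rev sym); rewrite -(rev_ordK s) -(rev_ordK t) [sigma + tau]addnC.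
apply: walk_atmost_mirror.
apply: (walk_around_nested_up (mirror_sym sym) (mirror_X sym X) (B := rev_ord C)).
- apply: reach_within_sub (reach_within_mirror tw) => u.
  by rewrite unfold_in /= /right_of_s /left_of_t leq_rev_ord.
- apply: reach_within_sub (reach_within_mirror sv) => u.
  by rewrite unfold_in /= /right_of_s /left_of_t rev_ord_leq.
- by rewrite /mirror /= (rev_ordK w) (rev_ordK C).
- by rewrite rev_ord_leq (rev_ordK C) le_Cs ltn_rev_ord.
Qed.

Hypothesis lt_st : s < t.

Lemma walk_between_horizons sigma tau (v w : 'I_n) :
  reach_within e (left_of_t t) sigma s v -> reach_within e (right_of_s s) tau t w ->
  v < w -> t <= rhorizon e v -> lhorizon e w <= s ->
  walk_atmost e (sigma + tau + 3) s t.
Proof.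
move=> sv tw lt_vw le_tB le_Cs.
have le_vt : v <= t := reach_within_end sv.
have le_sw : s <= w := reach_within_end tw.
have s_to_v := reach_within_walk sv.
have w_to_t := walk_atmost_rev sym (reach_within_walk tw).
have join k : k <= 3 -> walk_atmost e k v w -> walk_atmost e (sigma + tau + 3) s t.
  move=> le_k3 vw.
  by apply: walk_atmost_le (walk_atmost_cat (walk_atmost_cat s_to_v vw) w_to_t); lia.
have neq_adj x y : e x y -> x != y :> nat by apply: contraTneq => /val_inj->; rewrite irr.
case: (rhorizon_adj e v) => [eq_Bv | evB].
  have eq_tv : t = v by apply: ord_inj; move: le_tB; rewrite eq_Bv; lia.
  by rewrite eq_tv; apply: walk_atmost_le s_to_v; lia.
case: (lhorizon_adj e w) => [eq_Cw | ewC].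
  have eq_sw : s = w by apply: ord_inj; move: le_Cs; rewrite eq_Cw; lia.
  by rewrite eq_sw; apply: walk_atmost_le w_to_t; lia.
set B := rhorizon e v in le_tB evB; set C := lhorizon e w in le_Cs ewC.
have lt_vB : v < B by rewrite ltn_neqAle neq_adj //; exact: leq_trans le_tB.
have lt_CB : C < B by apply: leq_ltn_trans le_Cs (leq_trans lt_st le_tB).
have eCw : e C w by rewrite sym.
have edge_vw : e v w -> walk_atmost e (sigma + tau + 3) s t.
  by move=> evw; apply: (join 1) => //; exact: walk_atmost_edge.
case: (ltngtP C v) => [lt_Cv | lt_vC | /val_inj eq_Cv].
- case: (ltngtP B w) => [lt_Bw | lt_wB | /val_inj eq_Bw].
  + by apply: walk_atmost_le (walk_around_nested_up sym X sv tw evB _); rewrite ?le_tB //; lia.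
  + have eBC : e B C by rewrite sym; exact: X lt_Cv lt_vw lt_wB eCw evB.
    apply: (join 3) => //.
    exact: walk_atmost_cat (walk_atmost_cat (walk_atmost_edge evB) (walk_atmost_edge eBC))
                           (walk_atmost_edge eCw).
  + by apply: edge_vw; rewrite -eq_Bw.
- case: (ltngtP B w) => [lt_Bw | lt_wB | /val_inj eq_Bw].
  + exact/edge_vw/(X lt_vC lt_CB lt_Bw evB eCw).
  + by apply: walk_atmost_le (walk_around_nested_down sv tw ewC _); rewrite ?lt_vC //; lia.
  + by apply: edge_vw; rewrite -eq_Bw.
- by apply: edge_vw; rewrite sym -eq_Cv.
Qed.

End Horizons.

Section Extremes.
Variables (n : nat) (e : rel 'I_n) (s t : 'I_n).
Hypothesis le_st : s <= t.

Lemma reach_within_alpha_s k : reach_within e (left_of_t t) k s (alpha_s e s t k).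
Proof. by rewrite /alpha_s; case: arg_minnP => //; exact: reach_within_refl. Qed.

Lemma reach_within_beta_s k : reach_within e (left_of_t t) k s (beta_s e s t k).
Proof. by rewrite /beta_s; case: arg_maxnP => //; exact: reach_within_refl. Qed.

Lemma reach_within_alpha_t k : reach_within e (right_of_s s) k t (alpha_t e s t k).
Proof. by rewrite /alpha_t; case: arg_maxnP => //; exact: reach_within_refl. Qed.

Lemma reach_within_beta_t k : reach_within e (right_of_s s) k t (beta_t e s t k).
Proof. by rewrite /beta_t; case: arg_minnP => //; exact: reach_within_refl. Qed.

End Extremes.

Theorem lemma12 (n : nat) (e : rel 'I_n) (s t : 'I_n) (dstar : nat) (d : int) :
  simple_graph e -> X_property e -> (s < t)%N -> is_dist e s t dstar ->
  ((exists sigma tau : nat, Posz (sigma + tau) = d /\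
       beta_s e s t sigma = beta_t e s t tau) \/
   (exists sigma tau : nat, Posz (sigma + tau) = (d - 1)%R /\
       e (alpha_s e s t sigma) (alpha_t e s t tau)) \/
   (exists sigma tau : nat, Posz (sigma + tau) = (d - 3)%R /\
     exists v w : 'I_n,
       [/\ v = alpha_s e s t sigma \/ v = beta_s e s t sigma,
           w = alpha_t e s t tau \/ w = beta_t e s t tau,
           (v < w)%N,
           (t <= rhorizon e v)%N &
           (lhorizon e w <= s)%N])) ->
  (Posz dstar <= d)%R.
Proof.
move=> [sym irr] X lt_st dist_st cases.
have le_st := ltnW lt_st.
suff [k le_kd st] : exists2 k : nat, (Posz k <= d)%R & walk_atmost e k s t.
  by have := is_dist_le dist_st st; lia.
case: cases => [[sigma [tau [def_d eq_beta]]] | [[sigma [tau [def_d e_alpha]]] | ]].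
- exists (sigma + tau); first by rewrite def_d.
  apply: walk_atmost_cat (reach_within_walk (reach_within_beta_s e le_st sigma)) _.
  by rewrite eq_beta; apply/(walk_atmost_rev sym)/reach_within_walk/reach_within_beta_t.
- exists (sigma + 1 + tau); first lia.
  have s_to_alpha := reach_within_walk (reach_within_alpha_s e le_st sigma).
  apply: walk_atmost_cat (walk_atmost_cat s_to_alpha (walk_atmost_edge e_alpha)) _.
  by apply/(walk_atmost_rev sym)/reach_within_walk/reach_within_alpha_t.
move=> [sigma [tau [def_d [v [w [def_v def_w lt_vw le_t_rv le_lw_s]]]]]].
exists (sigma + tau + 3); first lia.
apply: (walk_between_horizons sym irr X lt_st _ _ lt_vw le_t_rv le_lw_s).
- by case: def_v => ->; [exact: reach_within_alpha_s | exact: reach_within_beta_s].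
- by case: def_w => ->; [exact: reach_within_alpha_t | exact: reach_within_beta_t].
Qed.
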